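(* $\mathfrak{b}\leq\mathfrak{a}(conv)$.
   Context: $conv$ is the ideal on $\mathbb{Q}\cap[0,1]$ generated by (the ranges of) sequences in $\mathbb{Q}\cap[0,1]$ which converge in $[0,1]$, i.e. $A\in conv$ iff $A$ is covered by finitely many convergent sequences (together with a finite set). For an ideal $\mathcal{J}$ on a countable set, $\mathfrak{a}(\mathcal{J})$ is the smallest size of an uncountable family $\mathcal{A}$ of $\mathcal{J}$-positive sets (sets not in $\mathcal{J}$) which is maximal with respect to the property that $A\cap B\in\mathcal{J}$ for all distinct $A,B\in\mathcal{A}$. $\mathfrak{b}$ is the bounding number. *)

From HB Require Import structures.
From mathcomp Require Import all_boot all_order all_algebra.
From mathcomp Require Import all_classical all_reals all_analysis.
From mathcomp Require Import Rstruct Rstruct_topology.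
Set Implicit Arguments. Unset Strict Implicit. Unset Printing Implicit Defensive.
Import Order.TTheory GRing.Theory Num.Theory.
Local Open Scope classical_set_scope.
Local Open Scope ring_scope.

Definition QI : set rat := [set q | (0 <= q) && (q <= 1)].

(* A sequence in Q ∩ [0,1] which converges (in the reals) to a point;
   the limit lies in [0,1] automatically since [0,1] is closed, but we
   require it explicitly. *)
Definition conv_seq (s : nat -> rat) : Prop :=
  (forall n, QI (s n)) /\
  exists x : Rdefinitions.R, 0 <= x <= 1 /\ ((fun n => (ratr (s n) : Rdefinitions.R)) @ \oo --> x).

Definition conv (A : set rat) : Prop :=
  A `<=` QI /\
  exists (F : set rat) (ss : seq (nat -> rat)),
    finite_set F /\ (forall s, s \in ss -> conv_seq s) /\
    A `<=` F `|` [set q | exists2 s, s \in ss & exists n, s n = q].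

Definition conv_pos (A : set rat) : Prop := A `<=` QI /\ ~ conv A.

Definition conv_MAD (Af : set (set rat)) : Prop :=
  (forall A, Af A -> conv_pos A) /\
  (forall A B, Af A -> Af B -> A <> B -> conv (A `&` B)) /\
  (forall B, conv_pos B -> ~ Af B -> exists2 A, Af A & ~ conv (A `&` B)).

Definition unbounded (F : set (nat -> nat)) : Prop :=
  ~ exists g : nat -> nat, forall f, F f -> exists N, forall n, (N <= n)%N -> (f n <= g n)%N.

(* A set X ⊆ Q∩[0,1] is in conv iff it has finitely many accumulation points
   in R: a convergent sequence accumulates only at its limit; conversely X is
   covered by its points far from all accumulation points (finitely many, by
   Bolzano-Weierstrass) and, for each accumulation point y, one sequence
   converging to y through the points of X that are nearest to y.

   An uncountable MAD family Af contains distinct A_0, A_1, ...; each A_n has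
   infinitely many accumulation points x_{n,j}, approached by columns
   (p_{n,j,k})_k inside A_n. For A in Af and large n, A ∩ A_n is in conv, so A
   meets only finitely many columns of A_n infinitely often, and every other
   column only finitely often; diag_bound A collects these bounds. If one g
   dominated every diag_bound A, the set B of the p_{n,j,k} with
   g(n) < j <= g(n) + n and k > g(max n j) would have infinitely many
   accumulation points, yet each A ∩ B would lie in finitely many columns,
   contradicting maximality. *)

From Pilot Require Import Defs.
From HB Require Import structures.
From mathcomp Require Import all_boot all_order all_algebra.
From mathcomp Require Import all_classical all_reals all_analysis.
From mathcomp Require Import Rstruct Rstruct_topology.
Unset Printing Implicit Defensive.
Import Order.TTheory GRing.Theory Num.Theory numFieldNormedType.Exports.
Local Open Scope classical_set_scope.
Local Open Scope ring_scope.

Lemma limit_point_subset {T : topologicalType} {A B : set T} :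
  A `<=` B -> limit_point A `<=` limit_point B.
Proof. by move=> AB a Aa U /Aa [y [ya /AB By Uy]]; exists y. Qed.

Lemma limit_pointU {T : topologicalType} {A B : set T} {a : T} :
  limit_point (A `|` B) a -> limit_point A a \/ limit_point B a.
Proof.
move=> ABa; apply: contrapT => /not_orP[]; rewrite !not_limit_pointE.
move=> [U aU AU] [V aV BV]; have [y [/eqP ya [Ay|By] [Uy Vy]]] := ABa _ (filterI aU aV).
- exact/ya/AU.
- exact/ya/BV.
Qed.

Lemma finite_set_limit_point {R : archiRealFieldType} {A : set R} {a : R} :
  finite_set A -> ~ limit_point A a.
Proof. by move=> finA /limit_point_infinite_setP /(_ _ filterT); rewrite setTI. Qed.

Lemma limit_point_bigcup {R : archiRealFieldType} {I : eqType} {l : seq I}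
    {E : I -> set R} {a : R} :
  limit_point (\bigcup_(i in [set` l]) E i) a -> exists2 i, i \in l & limit_point (E i) a.
Proof.
elim: l => [|i l IH] El.
  have : limit_point set0 a by apply: limit_point_subset El => y [].
  by move/(finite_set_limit_point (finite_set0 _)).
have /limit_pointU[Ei|/IH[j jl Ej]] : limit_point (E i `|` \bigcup_(j in [set` l]) E j) a.
  apply: limit_point_subset El => y [j /=].
  by rewrite in_cons => /orP[/eqP->|jl] Ejy; [left | right; exists j].
- by exists i; first exact: mem_head.
- by exists j; rewrite // in_cons jl orbT.
Qed.

Lemma limit_point_range_cvg {R : realType} {u : R^nat} {z a : R} :
  u @ \oo --> z -> limit_point (range u) a -> a = z.
Proof.
move=> uz /limit_point_cluster_eventually/(cvg_cluster uz).
by rewrite -closeEnbhs => /(close_eq (@Rhausdorff R)).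
Qed.

Local Notation R := Rdefinitions.R.

Definition q2R (q : rat) : R := ratr q.

Definition acc (X : set rat) : set R := limit_point (q2R @` X).

Lemma acc_subset {X Y : set rat} : X `<=` Y -> acc X `<=` acc Y.
Proof. by move=> XY; apply/limit_point_subset/image_subset. Qed.

Lemma q2R_in01 q : QI q -> q2R q \in `[0, 1].
Proof.
move=> /andP[q0 q1]; rewrite in_itv /= ler0q q0 /=.
by rewrite -(rmorph1 (ratr : rat -> R)) ler_rat.
Qed.

Lemma acc_in01 {X : set rat} {y : R} : X `<=` QI -> acc X y -> 0 <= y <= 1.
Proof.
move=> XQ /subset_limit_point Xy.
suff : y \in `[0, 1] by rewrite in_itv.
apply: (interval_closed (a := BLeft 0) (b := BRight 1)) => //.
by apply: closureS Xy => _ [q /XQ /q2R_in01 q01 <-].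
Qed.

Definition frequently_in {T} (A : set T) (s : nat -> T) :=
  forall i, exists2 k, (i <= k)%N & A (s k).

Lemma not_frequently_in_bounded {T} {A : set T} {s : nat -> T} :
  ~ frequently_in A s -> exists b, forall k, A (s k) -> (k <= b)%N.
Proof.
move=> /existsNP[i Ni]; exists i => k Ak; rewrite leqNgt; apply/negP => ik.
by apply: Ni; exists k; first exact: ltnW.
Qed.

Lemma acc_frequently {A : set rat} {s : nat -> rat} {y : R} :
  q2R \o s @ \oo --> y -> (forall k, q2R (s k) != y) -> frequently_in A s ->
  acc A y.
Proof.
move=> sy sNy As U /sy[N _ NU]; have [k Nk Ak] := As N.
by exists (q2R (s k)); split; [exact: sNy | exists (s k) | exact: NU].
Qed.

Lemma acc_cvg_seq {X : set rat} {y : R} : acc X y -> exists s : nat -> rat,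
  [/\ forall k, X (s k), forall k, q2R (s k) != y & q2R \o s @ \oo --> y].
Proof.
move=> /limit_pointP[r [rX rNy ry]].
have /choice[s sP] : forall k, exists q, X q /\ q2R q = r k.
  by move=> k; have [q Xq qr] := rX _ (imageT r k); exists q.
exists s; split.
- by move=> k; case: (sP k).
- by move=> k; case: (sP k) => _ ->.
- by rewrite (_ : q2R \o s = r) //; apply: funext => k; case: (sP k).
Qed.

Lemma conv_finite_acc {X : set rat} : Defs.conv X -> finite_set (acc X).
Proof.
move=> [_ [F [ss [finF [ssP XF]]]]].
apply: (sub_finite_set _ (finite_seq [seq limn (q2R \o s) | s <- ss])) => y.
have XFss : q2R @` X `<=` q2R @` F `|` \bigcup_(s in [set` ss]) range (q2R \o s).
  by move=> _ [q /XF[Fq|[s sss [k <-]]] <-]; [left; exists q | right; exists s].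
move=> /(limit_point_subset XFss)/limit_pointU[|].
  by move/(finite_set_limit_point (finite_image _ finF)).
move=> /limit_point_bigcup[s sss /limit_point_range_cvg sy].
have [_ [z [_ sz]]] := ssP s sss.
by apply/mapP; exists s; rewrite // (sy _ sz); apply/esym/(cvg_lim (@Rhausdorff R)).
Qed.

Lemma infinite_acc_nonempty {X : set rat} : X `<=` QI -> infinite_set X -> acc X !=set0.
Proof.
move=> XQ infX; apply: infinite_bounded_limit_point_nonempty.
  move=> /(finite_preimage (f := q2R) (in2W (fmorph_inj _))) finX.
  by case: infX; apply: sub_finite_set finX => q Xq; exists q.
apply: filterS (nbhs_pinfty_ge (num_real (1 : R))) => M M1 t [q /XQ /q2R_in01].
by rewrite in_itv => /andP[q0 q1] <-; rewrite /= ger0_norm //; apply: le_trans q1 M1.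
Qed.

Lemma finite_far_from_acc {X : set rat} {e : R} : X `<=` QI -> 0 < e ->
  finite_set [set a | X a /\ forall y, acc X y -> e <= `|q2R a - y|].
Proof.
move=> XQ e0; set E := [set a | _ /\ _]; have EX : E `<=` X by move=> a [].
apply: contrapT => /(infinite_acc_nonempty (subset_trans EX XQ))[z Ez].
have [y [_ [a [_ far] <-] az]] := Ez _ (nbhsx_ballx z e e0).
by move: az; rewrite /ball /= distrC ltNge far //; apply: acc_subset EX _ Ez.
Qed.

(* Enumerate S along [pickle], filling the gaps with [w]: the finitely many
   points of S far from y have bounded codes. *)
Lemma cvg_seq_cover {T : countType} {f : T -> R} {S : set T} {w : nat -> T} {y : R} :
  f \o w @ \oo --> y ->
  (forall e : R, 0 < e -> finite_set [set a | S a /\ e <= `|y - f a|]) ->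
  exists s : nat -> T, [/\ S `<=` range s, range s `<=` S `|` range w
                         & f \o s @ \oo --> y].
Proof.
move=> wy Sfar.
pose s k := if pickle_inv k is Some a then (if `[< S a >] then a else w k) else w k.
exists s; split.
- by move=> a Sa; exists (pickle a) => //; rewrite /s pickleK_inv asboolT.
- move=> _ [k _ <-]; rewrite /s.
  case: (pickle_inv k) => [a|]; last by right; exists k.
  by case: asboolP => [Sa|_]; [left | right; exists k].
apply/(@cvgrPdist_lt _ R^o) => e e0.
have [l farl] := (finite_seqP _).1 (Sfar e e0).
have [N _ wN] := (@cvgrPdist_lt _ R^o _ _ _ (f \o w) y).1 wy e e0.
exists (maxn N (\max_(a <- l) pickle a).+1) => // k /=; rewrite geq_max => /andP[Nk lk].
rewrite /s; case kE: (pickle_inv k) => [a|]; last exact: wN.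
case: asboolP => Sa; last exact: wN.
rewrite ltNge; apply/negP => ea.
have al : a \in l by have : [set` l] a by rewrite -farl.
have ak : pickle a = k by have := @pickle_invK T k; rewrite kE.
by move: lk; rewrite -ak ltnNge leq_bigmax_seq.
Qed.

Lemma seq_argmin {d} {T : eqType} {U : orderType d} (f : T -> U) {s : seq T} :
  s != [::] -> exists2 x, x \in s & forall y, y \in s -> (f x <= f y)%O.
Proof.
elim: s => // a [|b s] IH _.
  by exists a => [|y]; rewrite ?mem_head // inE => /eqP->.
have [x xs xmin] := IH isT; have [ax|xa] := leP (f a) (f x).
- exists a => [|y]; first exact: mem_head.
  by rewrite in_cons => /orP[/eqP->//|/xmin]; apply: le_trans.
- exists x => [|y]; first by rewrite in_cons xs orbT.
  by rewrite in_cons => /orP[/eqP->|/xmin//]; apply: ltW.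
Qed.

Definition nearest_cell (X : set rat) (L : seq R) (y : R) : set rat :=
  [set a | X a /\ forall y', y' \in L -> `|q2R a - y| <= `|q2R a - y'|].

Lemma nearest_cell_cover {X : set rat} {L : seq R} {y : R} :
  X `<=` QI -> acc X = [set` L] -> y \in L ->
  exists2 s, conv_seq s & nearest_cell X L y `<=` range s.
Proof.
move=> XQ XL yL; have yX : acc X y by rewrite XL.
have [w [wX _ wy]] := acc_cvg_seq yX.
have [|s [cell_s s_sub sy]] := cvg_seq_cover wy (S := nearest_cell X L y).
  move=> e e0; apply: sub_finite_set (finite_far_from_acc XQ e0).
  move=> a [[Xa amin] ea]; split=> // y'; rewrite XL => /amin.
  by apply: le_trans; rewrite distrC.
exists s => //; split; last by exists y; split; [exact: acc_in01 XQ yX | exact: sy].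
by move=> k; have [[Xs _]|[n _ <-]] := s_sub _ (imageT s k); apply: XQ.
Qed.

Lemma finite_acc_conv {X : set rat} : X `<=` QI -> finite_set (acc X) -> Defs.conv X.
Proof.
move=> XQ /finite_seqP[L XL]; split=> //.
have /choice[sy syP] : forall y, exists s, y \in L ->
    conv_seq s /\ nearest_cell X L y `<=` range s.
  move=> y; have [yL|_] := boolP (y \in L); last by exists (fun=> 0).
  by have [s] := nearest_cell_cover XQ XL yL; exists s.
exists [set a | X a /\ forall y, acc X y -> 1 <= `|q2R a - y|], (map sy L).
split; first exact: finite_far_from_acc.
split=> [_ /mapP[y yL ->]|a Xa]; first exact: (syP y yL).1.
have [far|near] := pselect (forall y, acc X y -> 1 <= `|q2R a - y|); first by left.
have L0 : L != [::] by apply: contra_notN near => /eqP L0 y; rewrite XL L0.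
have [y yL ymin] := seq_argmin (fun y => `|q2R a - y|) L0.
have [k _ <-] := (syP y yL).2 a (conj Xa ymin).
by right; exists (sy y); [exact: map_f | exists k].
Qed.

Lemma conv_pos_columns {A_ : nat -> set rat} : (forall n, conv_pos (A_ n)) ->
  exists (x : nat -> nat -> R) (p : nat -> nat -> nat -> rat),
    [/\ forall n, injective (x n), forall n j k, A_ n (p n j k),
        forall n j k, q2R (p n j k) != x n j
      & forall n j, q2R \o p n j @ \oo --> x n j].
Proof.
move=> A_pos.
have /choice[x xP] : forall n, exists x : nat -> R,
    injective x /\ forall j, acc (A_ n) (x j).
  move=> n; have [A_QI A_nconv] := A_pos n.
  have /infiniteP/pcard_leP/injfunPex[x xA x_inj] : infinite_set (acc (A_ n)).
    by move=> /(finite_acc_conv A_QI).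
  by exists x; split; [exact: in2TT x_inj | move=> j; exact: xA].
have /choice[p pP] : forall nj : nat * nat, exists p : nat -> rat,
    [/\ forall k, A_ nj.1 (p k), forall k, q2R (p k) != x nj.1 nj.2
      & q2R \o p @ \oo --> x nj.1 nj.2].
  by move=> [n j]; apply: acc_cvg_seq; exact: (xP n).2.
exists x, (fun n j => p (n, j)); split=> [n|n j k|n j k|n j].
- exact: (xP n).1.
- by case: (pP (n, j)).
- by case: (pP (n, j)).
- by case: (pP (n, j)).
Qed.

(* Junk value 0 when P is unbounded. *)
Definition nat_bound (P : set nat) : nat :=
  xget 0%N [set b | forall k, P k -> (k <= b)%N].

Lemma nat_boundP {P : set nat} : (exists b, forall k, P k -> (k <= b)%N) ->
  forall k, P k -> (k <= nat_bound P)%N.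
Proof. exact: (@xgetPex _ 0%N [set b | forall k, P k -> (k <= b)%N]). Qed.

Section diagonal.
Context {A_ : nat -> set rat} {x : nat -> nat -> R}.
Variable p : nat -> nat -> nat -> rat.
Hypothesis A_QI : forall n, A_ n `<=` QI.
Hypothesis x_inj : forall n, injective (x n).
Hypothesis p_A : forall n j k, A_ n (p n j k).
Hypothesis p_neq : forall n j k, q2R (p n j k) != x n j.
Hypothesis p_cvg : forall n j, q2R \o p n j @ \oo --> x n j.

Lemma conv_seq_column n j : conv_seq (p n j).
Proof.
split=> [k|]; first exact/A_QI/p_A.
exists (x n j); split; last exact: p_cvg.
apply: (acc_in01 (A_QI n)).
by apply: acc_frequently (p_cvg n j) (p_neq n j) _ => i; exists i.
Qed.

Definition col_bound (A : set rat) n := nat_bound [set j | frequently_in A (p n j)].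

Definition row_bound (A : set rat) n j := nat_bound [set k | A (p n j k)].

Definition diag_bound (A : set rat) m : nat :=
  (\max_(n < m.+1) \max_(j < m.+1) maxn (col_bound A n) (row_bound A n j))%N.

Lemma col_boundP {A n j} : Defs.conv (A `&` A_ n) -> frequently_in A (p n j) ->
  (j <= col_bound A n)%N.
Proof.
move=> /conv_finite_acc/(finite_preimage (in2W (x_inj n)))/finite_seqP[l lE].
move: j; apply: nat_boundP; exists (\max_(j <- l) j) => j Aj.
have jl : j \in l.
  suff : (x n @^-1` acc (A `&` A_ n)) j by rewrite lE.
  apply: acc_frequently (p_cvg n j) (p_neq n j) _ => i.
  by have [k ik Ak] := Aj i; exists k => //; split.
exact: (@leq_bigmax_seq _ l xpredT id j jl isT).
Qed.

Lemma row_boundP {A n j k} : ~ frequently_in A (p n j) -> A (p n j k) ->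
  (k <= row_bound A n j)%N.
Proof. by move=> /not_frequently_in_bounded bnd; move: k; apply: (nat_boundP bnd). Qed.

Lemma leq_diag_bound A {n j m : nat} : (n <= m)%N -> (j <= m)%N ->
  (maxn (col_bound A n) (row_bound A n j) <= diag_bound A m)%N.
Proof.
rewrite -ltnS => nm; rewrite -ltnS => jm.
apply: (leq_trans _ (leq_bigmax (Ordinal nm))).
exact: (leq_bigmax (Ordinal jm)).
Qed.

Variable g : nat -> nat.

Definition diag_set : set rat := [set q | exists n j k,
  [/\ (g n < j <= g n + n)%N, (g (maxn n j) < k)%N & q = p n j k]].

Lemma diag_set_QI : diag_set `<=` QI.
Proof. by move=> _ [n [j [k [_ _ ->]]]]; apply/A_QI/p_A. Qed.

Lemma diag_set_not_conv : ~ Defs.conv diag_set.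
Proof.
move=> /conv_finite_acc/finite_seqP[Z accZ].
pose n := (size Z).+1.
have xZ : {subset [seq x n j | j <- iota (g n).+1 n] <= Z}.
  move=> t /mapP[j]; rewrite mem_iota => /andP[gj jn] ->.
  suff : acc diag_set (x n j) by rewrite accZ.
  apply: acc_frequently (p_cvg n j) (p_neq n j) _ => i.
  exists (maxn i (g (maxn n j)).+1); first exact: leq_maxl.
  exists n, j, (maxn i (g (maxn n j)).+1); split=> //.
  - by rewrite gj -ltnS -addSn.
  - by rewrite leq_max ltnSn orbT.
have := uniq_leq_size _ xZ.
by rewrite map_inj_uniq ?iota_uniq // size_map size_iota ltnn => /(_ isT).
Qed.

Section dominated.
Variables (A : set rat) (N : nat).
Hypothesis g_dom : forall m, (N <= m)%N -> (diag_bound A m <= g m)%N.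
Hypothesis A_conv : forall n, (N <= n)%N -> Defs.conv (A `&` A_ n).

Lemma notin_diag_column n j k : (N <= n)%N -> (g n < j)%N ->
  (g (maxn n j) < k)%N -> ~ A (p n j k).
Proof.
move=> Nn gj gk Ak.
have col_le : (col_bound A n <= g n)%N.
  apply: leq_trans (leq_maxl _ (row_bound A n 0)) _.
  exact: leq_trans (leq_diag_bound A (leqnn n) (leq0n n)) (g_dom n Nn).
have row_le : (row_bound A n j <= g (maxn n j))%N.
  apply: leq_trans (leq_maxr (col_bound A n) _) _.
  apply: leq_trans (leq_diag_bound A (leq_maxl n j) (leq_maxr n j)) _.
  exact/g_dom/(leq_trans Nn)/leq_maxl.
have : ~ frequently_in A (p n j).
  by move=> /(col_boundP (A_conv n Nn)); apply/negP; rewrite -ltnNge (leq_ltn_trans col_le).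
by move=> /row_boundP/(_ Ak); apply/negP; rewrite -ltnNge (leq_ltn_trans row_le).
Qed.

Lemma conv_diag_setI : Defs.conv (A `&` diag_set).
Proof.
split; first by move=> q [_ /diag_set_QI].
exists set0, [seq p n j | n <- iota 0 N, j <- iota 0 (g n + n).+1].
split; first exact: finite_set0.
split; first by move=> _ /allpairsPdep[n [j [_ _ ->]]]; exact: conv_seq_column.
move=> q [Aq [n [j [k [/andP[gj jn] gk qE]]]]]; rewrite qE in Aq *.
right; exists (p n j); last by exists k.
apply/allpairsPdep; exists n, j; split=> //; rewrite mem_iota ?ltnS //=.
by rewrite ltnNge; apply/negP => Nn; exact: notin_diag_column Nn gj gk Aq.
Qed.

End dominated.

End diagonal.

Lemma inj_eventually_neq {T} {f : nat -> T} (a : T) : injective f ->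
  exists N, forall n, (N <= n)%N -> f n <> a.
Proof.
move=> f_inj; have [[n0 <-]|fNa] := pselect (exists n0, f n0 = a).
  by exists n0.+1 => n n0n /f_inj nn0; rewrite nn0 ltnn in n0n.
by exists 0%N => n _ fna; apply: fNa; exists n.
Qed.

Theorem mainTheorem3 :
  forall Af : set (set rat),
    conv_MAD Af -> ~ countable Af ->
    exists F : set (nat -> nat), unbounded F /\ (F #<= Af)%card.
Proof.
move=> Af [Af_pos [Af_ad Af_max]] Af_unc.
have /infiniteP/pcard_leP/injfunPex[A_ A_Af A_inj] : infinite_set Af.
  by move=> /finite_set_countable.
have A_pos n : conv_pos (A_ n) by apply/Af_pos/A_Af.
have [x [p [x_inj p_A p_neq p_cvg]]] := conv_pos_columns A_pos.
have A_QI n : A_ n `<=` QI := (A_pos n).1.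
exists (diag_bound p @` Af); split; last exact: card_image_le.
move=> [g g_dom]; set B := diag_set p g.
have B_nconv : ~ Defs.conv B := diag_set_not_conv p x_inj p_neq p_cvg g.
have AB_conv A : Af A -> Defs.conv (A `&` B).
  move=> AfA; have [N1 dom1] := g_dom _ (imageP _ AfA).
  have [N2 neq2] := inj_eventually_neq A (in2TT A_inj).
  apply: (conv_diag_setI p A_QI x_inj p_A p_neq p_cvg g A (maxn N1 N2)).
  - by move=> m /(leq_trans (leq_maxl _ _)) /dom1.
  - move=> n /(leq_trans (leq_maxr _ _)) /neq2 nA.
    by apply: Af_ad => //; [exact: A_Af | move/esym].
have [AfB|nAfB] := pselect (Af B).
  by apply: B_nconv; rewrite -[B]setIid; exact: AB_conv.
have [A AfA []] := Af_max B (conj (diag_set_QI p A_QI p_A g) B_nconv) nAfB.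
exact: AB_conv.
Qed.
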